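(* Let $q>2$ be a prime power and $k\ge 3$ an integer. Then there exists a linear AOA$(1,k-1,k,q)$.
   Context: An orthogonal array OA$(t,k,v)$ (with $1\le t\le k$) is a $v^t\times k$ array with entries from a set $X$ of size $v$ such that, for every choice of $t$ of its columns, each $t$-tuple in $X^t$ appears exactly once as a row of the corresponding $v^t\times t$ subarray. For integers $1\le s\le t\le k$, an augmented orthogonal array AOA$(s,t,k,v)$ is a $v^t\times(k+1)$ array $A$ such that: (1) the first $k$ columns of $A$ form an OA$(t,k,v)$ on a symbol set $X$ of size $v$; (2) the last column of $A$ has entries from a set $Y$ of size $v^{t-s}$; (3) for any choice of $s$ of the first $k$ columns, these $s$ columns together with the last column contain every $(s+1)$-tuple of $X^s\times Y$ exactly once as a row. For a prime power $q$, an AOA$(s,t,k,q)$ is linear if $X=\mathbb{F}_q$, $Y=\mathbb{F}_q^{t-s}$, and its set of rows, regarded as vectors in $\mathbb{F}_q^{k}\times\mathbb{F}_q^{t-s}=\mathbb{F}_q^{k+t-s}$, is an $\mathbb{F}_q$-linear subspace. *)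

From HB Require Import structures.
From mathcomp Require Import all_boot all_order all_algebra all_fingroup all_field.
Set Implicit Arguments. Unset Strict Implicit. Unset Printing Implicit Defensive.
Import GRing.Theory.
Local Open Scope ring_scope.

Definition is_OA (X : finType) (t k N : nat) (A : 'I_N -> 'I_k -> X) : Prop :=
  [/\ (1 <= t <= k)%N, N = (#|X| ^ t)%N &
      forall S : {set 'I_k}, #|S| = t -> forall f : 'I_k -> X,
        #|[set r : 'I_N | [forall j in S, A r j == f j]]| = 1%N].

Definition is_AOA (X Y : finType) (s t k N : nat)
    (A : 'I_N -> 'I_k -> X) (B : 'I_N -> Y) : Prop :=
  [/\ (1 <= s <= t)%N, is_OA t A, #|Y| = (#|X| ^ (t - s))%N &
      forall S : {set 'I_k}, #|S| = s -> forall (f : 'I_k -> X) (y : Y),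
        #|[set r : 'I_N | [forall j in S, A r j == f j] && (B r == y)]| = 1%N].

(* Linear AOA(s,t,k,q) over the finite field F (q = #|F|): X = F, Y = F^(t-s);
   each row is a vector of F^(k + (t-s)) = F^k x F^(t-s) (first k coordinates = the
   first k columns, the last t-s coordinates = the entry of the last column), and the
   set of rows is an F-linear subspace. *)
Definition linear_AOA (F : finFieldType) (s t k : nat) : Prop :=
  exists R : 'I_(#|F| ^ t) -> 'rV[F]_(k + (t - s)),
    is_AOA s t (fun r j => R r 0 (lshift (t - s) j)) (fun r => rsubmx (R r))
    /\ (exists r, R r = 0)
    /\ (forall (a : F) (r1 r2 : 'I_(#|F| ^ t)), exists r3, R r3 = a *: R r1 + R r2).

(* Index the rows by x = (x_0, ..., x_m) in F^t, t = k - 1 = m + 1.  The k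
   columns of the OA are the t coordinates and their sum, so deleting any one
   of them leaves t columns from which x is recovered.  The augmented column
   is (a x_i - x_0)_{1 <= i <= m}; it vanishes exactly on the line
   x = c (1, 1/a, ..., 1/a), where the sum column equals c (a + m) / a, so
   every single OA column vanishes there only at x = 0 provided a <> 0 and
   a + m <> 0; such an a exists because q > 2.  Everything is F-linear, so
   these kernel computations give injectivity, and counting turns
   injectivity into "exactly one row". *)

From HB Require Import structures.
From mathcomp Require Import all_boot all_order all_algebra all_fingroup all_field.
From mathcomp Require Import ring.
Set Implicit Arguments. Unset Strict Implicit. Unset Printing Implicit Defensive.
Import GRing.Theory.
Local Open Scope ring_scope.

Lemma card_fiber_determined_aug (T K X Y : finType) (A : T -> K -> X) (B : T -> Y)
    (S : {set K}) :
  #|T| = (#|X| ^ #|S| * #|Y|)%N ->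
  (forall r1 r2, {in S, forall j, A r1 j = A r2 j} -> B r1 = B r2 -> r1 = r2) ->
  forall f y, #|[set r | [forall j in S, A r j == f j] && (B r == y)]| = 1%N.
Proof.
move=> cardT detAB f y.
pose h r := ([ffun j : {j | j \in S} => A r (val j)], B r).
have h_inj : injective h.
  move=> r1 r2 [/ffunP eqA eqB]; apply: detAB eqB => j Sj.
  by have := eqA (exist _ j Sj); rewrite !ffunE.
have [r0 hr0] : exists r0, h r0 = ([ffun j => f (val j)], y).
  have /codomP [r0 ->] : ([ffun j => f (val j)], y) \in codom h.
    by apply: (inj_card_onto h_inj); rewrite cardT card_prod card_ffun card_sig.
  by exists r0.
apply/eqP/cards1P; exists r0; apply/setP => r; rewrite !inE -(inj_eq h_inj) hr0.
rewrite xpair_eqE; congr (_ && _); apply/forall_inP/eqP => [eqA | /ffunP eqA j Sj].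
  by apply/ffunP => j; rewrite !ffunE; apply/eqP/eqA/valP.
by have := eqA (exist _ j Sj); rewrite !ffunE => ->.
Qed.

Lemma card_fiber_determined (T K X : finType) (A : T -> K -> X) (S : {set K}) :
  #|T| = (#|X| ^ #|S|)%N ->
  (forall r1 r2, {in S, forall j, A r1 j = A r2 j} -> r1 = r2) ->
  forall f, #|[set r | [forall j in S, A r j == f j]]| = 1%N.
Proof.
move=> cardT detA f.
rewrite -(@card_fiber_determined_aug _ _ _ _ A (fun=> tt) S _ _ f tt).
- by apply: eq_card => r; rewrite !inE andbT.
- by rewrite cardT card_unit muln1.
- by move=> r1 r2 eqA _; apply: detA.
Qed.

Lemma ord_card_bij (T : finType) (n : nat) :
  #|T| = n -> exists e : 'I_n -> T, bijective e.
Proof.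
move=> cardT; exists (fun i => enum_val (cast_ord (esym cardT) i)).
exists (fun x => cast_ord cardT (enum_rank x)) => [i|x].
  by rewrite enum_valK cast_ordKV.
by rewrite cast_ordK enum_rankK.
Qed.

Lemma exists_neq2 (T : finType) (u v : T) :
  (2 < #|T|)%N -> exists a, (a != u) && (a != v).
Proof.
move=> cardT; have : (0 < #|~: [set u; v]|)%N.
  rewrite -(leq_add2l #|[set u; v]|) cardsC addn1 cards2.
  by case: (u != v) => //; apply: ltnW.
by case/card_gt0P => a; rewrite !inE negb_or; exists a.
Qed.

Section SumConstruction.

Variables (F : finFieldType) (m : nat) (a : F).
Hypotheses (a_neq0 : a != 0) (a_addm_neq0 : a + m%:R != 0).

Definition oa_part (x : 'rV[F]_m.+1) : 'rV[F]_m.+2 :=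
  \row_j (if unlift ord0 j is Some i then x 0 i else \sum_i x 0 i).

Definition aug_part (x : 'rV[F]_m.+1) : 'rV[F]_m :=
  \row_i (a * x 0 (lift ord0 i) - x 0 ord0).

Definition aoa_row (x : 'rV[F]_m.+1) : 'rV[F]_(m.+2 + m) :=
  row_mx (oa_part x) (aug_part x).

Lemma oa_part_is_semilinear : semilinear oa_part.
Proof.
split=> [c x|x y]; apply/rowP => j; rewrite !mxE; case: (unlift _ j) => [i|];
  rewrite ?mxE // ?mulr_sumr -?big_split; by apply: eq_bigr => i _; rewrite !mxE.
Qed.
HB.instance Definition _ :=
  GRing.isSemilinear.Build F _ _ _ oa_part oa_part_is_semilinear.

Lemma aug_part_is_semilinear : semilinear aug_part.
Proof. by split=> [c x|x y]; apply/rowP => i; rewrite !mxE; ring. Qed.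
HB.instance Definition _ :=
  GRing.isSemilinear.Build F _ _ _ aug_part aug_part_is_semilinear.

Lemma aoa_row_is_semilinear : semilinear aoa_row.
Proof.
split=> [c x|x y]; rewrite /aoa_row.
  by rewrite !linearZ scale_row_mx.
by rewrite !linearD add_row_mx.
Qed.
HB.instance Definition _ :=
  GRing.isSemilinear.Build F _ _ _ aoa_row aoa_row_is_semilinear.

Lemma oa_part_eq0 (j0 : 'I_m.+2) x :
  (forall j, j != j0 -> oa_part x 0 j = 0) -> x = 0.
Proof.
move=> oa0; have x_eq0 i : lift ord0 i != j0 -> x 0 i = 0.
  by move=> /oa0; rewrite mxE liftK.
apply/rowP => i; rewrite mxE; case: (unliftP ord0 j0) => [i0|] def_j0; last first.
  by apply: x_eq0; rewrite def_j0 eq_sym neq_lift.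
have [-> | ne_i] := eqVneq i i0; last first.
  by apply: x_eq0; rewrite def_j0 (inj_eq lift_inj).
have := oa0 ord0; rewrite def_j0 neq_lift mxE unlift_none (bigD1 i0) //=.
rewrite big1 ?addr0 => [-> // |].
by move=> i1 ne_i1; apply: x_eq0; rewrite def_j0 (inj_eq lift_inj).
Qed.

Lemma aug_part_eq0 (j : 'I_m.+2) x :
  oa_part x 0 j = 0 -> aug_part x = 0 -> x = 0.
Proof.
move=> oa0 /rowP aug0.
have ax i : a * x 0 (lift ord0 i) = x 0 ord0.
  by apply/eqP; rewrite -subr_eq0; have := aug0 i; rewrite !mxE => ->.
suff x00 : x 0 ord0 = 0.
  apply/rowP => i; rewrite mxE; case: (unliftP ord0 i) => [i'|] -> //.
  by apply: (mulfI a_neq0); rewrite ax x00 mulr0.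
move: oa0; rewrite mxE; case: (unliftP ord0 j) => [j'|] _.
  by case: (unliftP ord0 j') => [i|] -> // xi0; rewrite -(ax i) xi0 mulr0.
rewrite big_ord_recl => sum0.
have : a * (x 0 ord0 + \sum_(i < m) x 0 (lift ord0 i)) = (a + m%:R) * x 0 ord0.
  rewrite mulrDr mulr_sumr (eq_bigr _ (fun i _ => ax i)) sumr_const card_ord.
  by rewrite mulrDl mulr_natl.
by rewrite sum0 mulr0 => /esym/eqP; rewrite mulf_eq0 (negbTE a_addm_neq0) => /eqP.
Qed.

Lemma aoa_rowEl x j : aoa_row x 0 (lshift m j) = oa_part x 0 j.
Proof. exact: row_mxEl. Qed.

Lemma aoa_rowEr x : rsubmx (aoa_row x) = aug_part x.
Proof. exact: row_mxKr. Qed.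

Lemma oa_partB x1 x2 j : oa_part (x1 - x2) 0 j = oa_part x1 0 j - oa_part x2 0 j.
Proof. by rewrite linearB !mxE. Qed.

Lemma sum_construction_linear_AOA : linear_AOA F 1 m.+1 m.+2.
Proof.
have [e [g eK gK]] : exists e : 'I_(#|F| ^ m.+1) -> 'rV[F]_m.+1, bijective e.
  by apply: ord_card_bij; rewrite card_mx mul1n.
(* t - s = m.+1 - 1 is not convertible to m for a variable m. *)
rewrite /linear_AOA subSS subn0.
have e_eq r1 r2 : e r1 - e r2 = 0 -> r1 = r2.
  by move/eqP; rewrite subr_eq0 => /eqP/(can_inj eK).
exists (fun r => aoa_row (e r)); split; last split.
- split=> //; first split=> [|//|S cardS]; first by rewrite /= leqnSn.
  + have /cards1P [j0 defS] : #|~: S| == 1%N.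
      by rewrite -(eqn_add2l #|S|) cardsC cardS card_ord addn1.
    have inS j : j != j0 -> j \in S.
      by move=> ne_j; rewrite -[j \in S]negbK -in_setC defS inE.
    apply: card_fiber_determined; first by rewrite card_ord cardS.
    move=> r1 r2 eq_r; apply: e_eq; apply: (oa_part_eq0 (j0 := j0)) => j /inS /eq_r.
    by rewrite !aoa_rowEl oa_partB => ->; rewrite subrr.
  + by rewrite card_mx mul1n subSS subn0.
  + move=> S /eqP/cards1P [j ->].
    apply: card_fiber_determined_aug.
      by rewrite card_ord cards1 card_mx mul1n expn1 -expnS.
    move=> r1 r2 eq_r; rewrite !aoa_rowEr => eq_aug.
    apply: e_eq; apply: (aug_part_eq0 (j := j)).
      by have := eq_r j (set11 j); rewrite !aoa_rowEl oa_partB => ->; rewrite subrr.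
    by apply/eqP; rewrite linearB subr_eq0; apply/eqP.
- by exists (g 0); rewrite gK linear0.
- by move=> c r1 r2; exists (g (c *: e r1 + e r2)); rewrite gK linearP.
Qed.

End SumConstruction.

Theorem theorem3p6 (F : finFieldType) (k : nat) :
  (2 < #|F|)%N -> (3 <= k)%N -> linear_AOA F 1 (k.-1) k.
Proof.
move=> cardF; case: k => [|[|m]] // _.
have [a /andP [a_neq0 a_neqNm]] := exists_neq2 0 (- m%:R) cardF.
by apply: (sum_construction_linear_AOA a_neq0); rewrite addr_eq0.
Qed.
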